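(* Let $J\subseteq S$ and $w\in\mathfrak{S}_n^J$. Then $w$ is $(J,231)$-avoiding if and only if $\mathrm{inv}(w)$ is $J$-compressed.
   Context: $\mathfrak{S}_n$ is the symmetric group on $[n]$, $s_i=(i,i+1)$, $S=\{s_1,\dots,s_{n-1}\}$, one-line notation $w=w_1\cdots w_n$, $\mathrm{inv}(w)=\{(i,j):i<j,\ w_i>w_j\}$, and $\mathrm{des}(w)=\{(i,j)\in\mathrm{inv}(w): w_i=w_j+1\}$. For $J\subseteq S$, $\mathfrak{S}_n^J$ is the set of $w$ with $w_i<w_{i+1}$ whenever $s_i\in J$ (the minimal length coset representatives, $w<_S ws$ for $s\in J$ in the weak order $u\le_S v\iff\mathrm{inv}(u)\subseteq\mathrm{inv}(v)$). Writing $J=S\setminus\{s_{j_1},\dots,s_{j_r}\}$ with $j_1<\dots<j_r$, the $J$-regions are $\{1,\dots,j_1\},\{j_1+1,\dots,j_2\},\dots,\{j_r+1,\dots,n\}$. $w\in\mathfrak{S}_n^J$ is $(J,231)$-avoiding if there are no indices $i<j<k$ in pairwise different $J$-regions with $w_k<w_i<w_j$ and $w_i=w_k+1$. The set $\mathrm{inv}(w)$ is $J$-compressed if whenever $i<j<k$ lie in pairwise different $J$-regions and $(i,k)\in\mathrm{des}(w)$, then $(i,j)\in\mathrm{inv}(w)$. *)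

From mathcomp Require Import all_boot all_order all_fingroup.
Set Implicit Arguments. Unset Strict Implicit. Unset Printing Implicit Defensive.

(* Conventions (0-indexed): a permutation w : 'S_n is viewed in one-line
   notation with position p : 'I_n holding value w p (paper: w_{p+1} = w p + 1).
   A simple generator s_{k+1} (k < n-1) is encoded by k : 'I_n.-1; it swaps
   positions k and k+1.  A subset J of S is a set  J : {set 'I_n.-1}. *)

Definition in_parabolic_quot n (J : {set 'I_n.-1}) (w : 'S_n) : Prop :=
  forall (k : 'I_n.-1) (p q : 'I_n), k \in J -> val p = val k -> val q = (val k).+1 ->
    w p < w q.

Definition same_region n (J : {set 'I_n.-1}) (p q : 'I_n) : Prop :=
  forall k : 'I_n.-1, minn p q <= k < maxn p q -> k \in J.

Definition is_inv n (w : 'S_n) (i j : 'I_n) : Prop := i < j /\ w j < w i.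
Definition is_des n (w : 'S_n) (i j : 'I_n) : Prop :=
  is_inv w i j /\ val (w i) = (w j).+1.

Definition J231_avoiding n (J : {set 'I_n.-1}) (w : 'S_n) : Prop :=
  ~ exists i j k : 'I_n,
      [/\ (i < j) /\ (j < k),
          ~ same_region J i j /\ ~ same_region J j k /\ ~ same_region J i k,
          (w k < w i) /\ (w i < w j) & val (w i) = (w k).+1].

Definition J_compressed n (J : {set 'I_n.-1}) (w : 'S_n) : Prop :=
  forall i j k : 'I_n,
    i < j -> j < k ->
    ~ same_region J i j -> ~ same_region J j k -> ~ same_region J i k ->
    is_des w i k -> is_inv w i j.

From mathcomp Require Import all_boot all_order all_fingroup.

(* Since the values of w are distinct, for i < j the pair (i,j) fails to be an
   inversion exactly when w_i < w_j.  A (J,231)-pattern i < j < k is therefore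
   the same thing as a descent (i,k) together with a non-inversion (i,j), both
   across pairwise different J-regions, which is precisely a violation of
   J-compression. *)

Lemma perm_ltNgt {n} (w : 'S_n) {i j : 'I_n} :
  i != j -> (w i < w j) = ~~ (w j < w i).
Proof.
move=> neq_ij; rewrite ltnNge leq_eqVlt negb_or.
by rewrite (inj_eq val_inj) (inj_eq perm_inj) eq_sym neq_ij.
Qed.

Theorem lemma3p7 (n : nat) (J : {set 'I_n.-1}) (w : 'S_n) :
  in_parabolic_quot J w ->
  (J231_avoiding J w <-> J_compressed J w).
Proof.
move=> _; split.
- move=> avoid i j k lt_ij lt_jk rij rjk rik [[lt_ik lt_wki] wik]; split=> //.
  have neq_ij : i != j by rewrite -val_eqE ltn_eqF.
  apply/negbNE; rewrite -(perm_ltNgt w neq_ij); apply/negP => lt_wij.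
  by apply: avoid; exists i, j, k.
- move=> compressed [i [j [k [[lt_ij lt_jk] [rij [rjk rik]] [lt_wki lt_wij] wik]]]].
  have des_ik : is_des w i k by do 2?split; first exact: ltn_trans lt_ij lt_jk.
  have [_ lt_wji] := compressed i j k lt_ij lt_jk rij rjk rik des_ik.
  have neq_ij : i != j by rewrite -val_eqE ltn_eqF.
  by move: lt_wij; rewrite (perm_ltNgt w neq_ij) lt_wji.
Qed.
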